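(* Let $q$ be a prime power and $d\ge 2q-1$ an integer. Let $R_d$ be the set of homogeneous polynomials of degree $d$ in $\mathbb{F}_q[x,y,z]$ (including $0$), and for $f\in R_d$ let $\#C_f(\mathbb{F}_q)$ denote the number of points of $\mathbb{P}^2(\mathbb{F}_q)$ at which $f$ vanishes. Let $B_1,\dots,B_{q^2+q+1}$ be independent identically distributed Bernoulli random variables taking the value $1$ with probability $1/q$. Then for every integer $n$, $$\frac{\#\{f\in R_d:\#C_f(\mathbb{F}_q)=n\}}{\#R_d}=\mathrm{Prob}(B_1+\dots+B_{q^2+q+1}=n).$$ *)

From HB Require Import structures.
From mathcomp Require Import all_boot all_order all_algebra all_field.
From mathcomp Require Import mpoly.
Set Implicit Arguments. Unset Strict Implicit. Unset Printing Implicit Defensive.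
Import Order.TTheory GRing.Theory Num.Theory.
Local Open Scope ring_scope.

(* R_d = dhomog 3 F d : homogeneous polynomials of degree d (including 0)
   in F[x,y,z] = {mpoly F[3]}.  Over a finite field this is a finite set;
   we equip it with a finType structure via the (injective) map sending a
   polynomial to its coefficients on the monomials of degree <= d.        *)
Section DhomogFinite.
Variables (F : finFieldType) (d : nat).

Definition dh_coefs (p : dhomog 3 F d) : {ffun 'X_{1..3 < d.+1} -> F} :=
  [ffun m => (val p)@_(bmnm m)].

Definition dh_of (c : {ffun 'X_{1..3 < d.+1} -> F}) : dhomog 3 F d :=
  [ 'dhomog_d (\sum_(m : 'X_{1..3 < d.+1} | mdeg m == d) c m *: 'X_[bmnm m]) ].

Lemma dh_coefsK : cancel dh_coefs dh_of.
Proof.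
move=> p; apply/val_inj; rewrite /dh_of /indhomog.
have hp : val p \is [in F[3], d.-homog] by exact: dhomog_is_dhomog.
set s := (\sum_(m : 'X_{1..3 < d.+1} | mdeg m == d) _).
suff -> : s = val p by rewrite insubdK.
apply/mpolyP => k; rewrite /s raddf_sum /=.
under eq_bigr => m _ do rewrite ffunE mcoeffZ mcoeffX.
case: (boolP (mdeg k == d)) => [/eqP hk | hk].
  have kb : (mdeg k < d.+1)%N by rewrite hk.
  rewrite (bigD1 (BMultinom kb)) /= ?hk ?eqxx // mulr1 big1 ?addr0 // => m.
  case/andP=> _ hm; case: eqP => [e|]; last by rewrite mulr0.
  by case/eqP: hm; apply/val_inj; rewrite /= e.
rewrite big1; first by rewrite (dhomog_nemf_coeff hp hk).
move=> m /eqP hm; case: eqP => [e|]; last by rewrite mulr0.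
by move: hk; rewrite -e hm eqxx.
Qed.

End DhomogFinite.

Definition homog_polys (F : finFieldType) (d : nat) : Type := dhomog 3 F d.

HB.instance Definition _ (F : finFieldType) (d : nat) :=
  Finite.copy (homog_polys F d) (can_type (@dh_coefsK F d)).

(* The projective plane P^2(F): its points are the lines (1-dim subspaces)
   of F^3, a point being the set { a v | a in F } for some nonzero v.   *)
Definition proj_line (F : finFieldType) (v : {ffun 'I_3 -> F}) :
  {set {ffun 'I_3 -> F}} := [set [ffun i => a * v i] | a : F].

Definition P2 (F : finFieldType) : {set {set {ffun 'I_3 -> F}}} :=
  [set proj_line v | v in [set v : {ffun 'I_3 -> F} | v != 0]].

Definition nb_points (F : finFieldType) (d : nat) (f : homog_polys F d) : nat :=
  #|[set L in P2 F | [forall w in L, (mpoly_of_dhomog f).@[w] == 0]]|.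

(* Prob(B_1 + ... + B_N = n) for i.i.d. Bernoulli(p) variables B_i,
   computed on the finite product probability space {0,1}^N. *)
Definition bernoulli_sum_prob (N : nat) (p : rat) (n : int) : rat :=
  \sum_(b : {ffun 'I_N -> bool} | (\sum_(i < N) (b i : nat))%:Z == n)
     \prod_(i < N) (if b i then p else 1 - p).

(* Evaluating a form of degree d at fixed representatives of the q^2 + q + 1 points of P^2(F_q)
   is an F_q-linear map R_d -> F_q^(P^2). When d >= 2q - 1 it is onto: for each point there is a
   form of degree d that is nonzero exactly at the representatives of that point. So all fibres
   of the evaluation map have the size of its kernel, and the values of a uniformly random f at
   the points are independent and uniform in F_q; each vanishes with probability 1/q, and
   #C_f(F_q) is the number of these zeros. *)

From HB Require Import structures.
From mathcomp Require Import all_boot all_order all_algebra all_field.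
From mathcomp Require Import mpoly.
From mathcomp Require Import zify ring.
Import Order.TTheory GRing.Theory Num.Theory.
Set Implicit Arguments. Unset Strict Implicit. Unset Printing Implicit Defensive.
Local Open Scope ring_scope.

Lemma card_preimE (T W : finType) (f : T -> W) (P : pred W) :
  #|[set t | P (f t)]| = (\sum_(w | P w) #|[set t | f t == w]|)%N.
Proof.
rewrite -sum1_card (partition_big f P) /= => [|t]; last by rewrite inE.
apply: eq_bigr => w Pw; rewrite -sum1_card; apply: eq_bigl => t.
by rewrite !inE andbC; case: eqP => // ->.
Qed.

Section ConstantFibers.
Variables (T W : finType) (f : T -> W) (k : nat).
Hypothesis card_fiber : forall w, #|[set t | f t == w]| = k.

Lemma card_preim_const_fiber (P : pred W) : #|[set t | P (f t)]| = (#|[set w | P w]| * k)%N.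
Proof.
rewrite card_preimE (eq_bigr (fun=> k)) // sum_nat_const.
by congr (_ * _)%N; apply: eq_card => w; rewrite inE.
Qed.

Lemma ratio_preim_const_fiber (R : numFieldType) (P : pred W) : (0 < k)%N ->
  (#|[set t | P (f t)]|%:R / #|T|%:R : R) = #|[set w | P w]|%:R / #|W|%:R.
Proof.
move=> k_gt0; have cardT : #|T| = (#|W| * k)%N.
  by rewrite -cardsT -[#|W|]cardsT -card_preim_const_fiber; apply: eq_card => t; rewrite !inE.
rewrite card_preim_const_fiber cardT.
by rewrite !natrM invfM mulrACA divff ?mulr1 // pnatr_eq0 -lt0n.
Qed.

End ConstantFibers.

Lemma card_ffun_pattern (I T : finType) (a : T) (b : {ffun I -> bool}) :
  #|[set w : {ffun I -> T} | [ffun i => w i == a] == b]| =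
  (\prod_i (if b i then 1 else #|T|.-1))%N.
Proof.
pose A i := if b i then pred1 a else predC1 a.
have cardA i : #|A i| = if b i then 1%N else #|T|.-1.
  by rewrite /A; case: (b i); rewrite ?card1 ?cardC1.
rewrite (eq_bigr _ (fun i _ => esym (cardA i))).
transitivity #|family A|; last by rewrite card_family foldrE big_map big_enum.
apply: eq_card => w; rewrite inE; apply/eqP/familyP => [pat_w i|wA].
  by rewrite /A -pat_w ffunE; case: eqP => [->|/eqP]; rewrite inE.
apply/ffunP => i; rewrite ffunE; move: (wA i); rewrite /A.
by case: (b i); rewrite inE; [move/eqP ->; rewrite eqxx | move/negbTE].
Qed.

Lemma bernoulli_sum_probE (T : finType) (a : T) (N : nat) (n : int) :
  bernoulli_sum_prob N (#|T|%:R)^-1 n =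
  #|[set w : {ffun 'I_N -> T} | #|[set i | w i == a]|%:Z == n]|%:R / (#|T| ^ N)%:R.
Proof.
pose pattern (w : {ffun 'I_N -> T}) := [ffun i => w i == a].
have count_pattern (w : {ffun 'I_N -> T}) :
    #|[set i | w i == a]| = (\sum_i (pattern w i : nat))%N.
  by rewrite -sum1_card big_mkcond /=; apply: eq_bigr => i _; rewrite !inE ffunE; case: eqP.
have q_gt0 : (0 < #|T|)%N by apply/card_gt0P; exists a.
rewrite (eq_card (B := [set w | (\sum_i (pattern w i : nat))%:Z == n])); last first.
  by move=> w; rewrite !inE count_pattern.
rewrite (card_preimE pattern (fun b => (\sum_i (b i : nat))%:Z == n)) natr_sum mulr_suml.
apply: eq_bigr => b _; rewrite card_ffun_pattern natr_prod natrX -[X in _ ^+ X]card_ord.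
rewrite -prodr_const -prodf_div; apply: eq_bigr => i _; case: (b i); first by rewrite mul1r.
by rewrite -subn1 natrB // mulrBl divff ?pnatr_eq0 -?lt0n // mul1r.
Qed.

Section PointwiseScaling.
Variables (R : idomainType) (I : finType).
Implicit Types (a b : R) (v : {ffun I -> R}).

Definition fscale a v : {ffun I -> R} := [ffun i => a * v i].

Lemma fscaleA a b v : fscale a (fscale b v) = fscale (a * b) v.
Proof. by apply/ffunP => i; rewrite !ffunE mulrA. Qed.

Lemma fscale1 v : fscale 1 v = v.
Proof. by apply/ffunP => i; rewrite ffunE mul1r. Qed.

Lemma ffun_neq0P v : reflect (exists i, v i != 0) (v != 0).
Proof.
apply: (iffP idP) => [v_neq0|[i]]; last by apply: contra => /eqP ->; rewrite ffunE.
apply/existsP; apply: contraR v_neq0 => /existsPn v0; apply/eqP/ffunP => i.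
by rewrite ffunE; apply/eqP/negPn.
Qed.

Lemma fscale_eq0 a v : (fscale a v == 0) = (a == 0) || (v == 0).
Proof.
apply/idP/idP => [|/orP[]/eqP->]; last 2 first.
- by apply/eqP/ffunP => i; rewrite !ffunE mul0r.
- by apply/eqP/ffunP => i; rewrite !ffunE mulr0.
apply: contraLR; rewrite negb_or => /andP[a_neq0 /ffun_neq0P[i vi_neq0]].
by apply/ffun_neq0P; exists i; rewrite ffunE mulf_neq0.
Qed.

Lemma fscale_injl v : v != 0 -> injective (fscale ^~ v).
Proof.
case/ffun_neq0P => i vi_neq0 a b /(congr1 (fun w : {ffun I -> R} => w i)).
by rewrite !ffunE => /mulIf; apply.
Qed.

End PointwiseScaling.

Section ProjectivePlane.
Variable F : finFieldType.
Implicit Types (u v w : {ffun 'I_3 -> F}).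

Lemma proj_lineP v w : reflect (exists a, w = fscale a v) (w \in proj_line v).
Proof. by apply: (iffP imsetP) => [[a _ ->]|[a ->]]; exists a. Qed.

Lemma proj_line_id v : v \in proj_line v.
Proof. by apply/proj_lineP; exists 1; rewrite fscale1. Qed.

Lemma proj_lineZ a v : a != 0 -> proj_line (fscale a v) = proj_line v.
Proof.
move=> a_neq0; apply/setP => w; apply/proj_lineP/proj_lineP => [[b ->]|[b ->]].
  by exists (b * a); rewrite fscaleA.
by exists (b / a); rewrite fscaleA mulfVK.
Qed.

Lemma proj_line_eq_scale u v : u != 0 -> proj_line u = proj_line v ->
  exists2 a, a != 0 & u = fscale a v.
Proof.
move=> u_neq0 uv; have /proj_lineP[a u_av] : u \in proj_line v by rewrite -uv proj_line_id.
by exists a => //; apply: contra u_neq0 => /eqP a0; rewrite u_av a0 fscale_eq0 eqxx.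
Qed.

Lemma card_proj_line_nz u : u != 0 ->
  #|[set v : {ffun 'I_3 -> F} | (v != 0) && (proj_line v == proj_line u)]| = #|F|.-1.
Proof.
move=> u_neq0; rewrite -(cardC1 0) -(card_imset _ (fscale_injl u_neq0)).
apply: eq_card => v; rewrite !inE; apply/andP/imsetP => [[v_neq0 /eqP vu]|[a]].
  by have [a a_neq0 ->] := proj_line_eq_scale v_neq0 vu; exists a; rewrite ?inE.
by rewrite inE => a_neq0 ->; rewrite fscale_eq0 negb_or a_neq0 u_neq0 proj_lineZ.
Qed.

Lemma card_P2 : #|P2 F| = (#|F| ^ 2 + #|F| + 1)%N.
Proof.
have q_gt1 := finNzRing_gt1 F.
have card_nz : #|[set v : {ffun 'I_3 -> F} | v != 0]| = (#|F|.-1 * (#|F| ^ 2 + #|F| + 1))%N.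
  rewrite cardsE cardC1 card_ffun card_ord.
  by case: #|F| q_gt1 => // q _; rewrite !expnS expn0 !muln1; lia.
have : #|[set v : {ffun 'I_3 -> F} | v != 0]| = (#|P2 F| * #|F|.-1)%N.
  rewrite -sum1_card (partition_big (@proj_line F) (mem (P2 F))) /= => [|v]; last first.
    by rewrite inE => v_neq0; apply: imset_f; rewrite inE.
  rewrite -sum_nat_const; apply: eq_bigr => L /imsetP[u]; rewrite inE => u_neq0 ->.
  by rewrite -(card_proj_line_nz u_neq0) -sum1_card; apply: eq_bigl => v; rewrite !inE.
rewrite card_nz mulnC => /eqP; rewrite eqn_mul2r => /orP[|/eqP //].
by rewrite -subn1 subn_eq0 leqNgt q_gt1.
Qed.

Lemma proj_line_eq_minors k v w : v k != 0 -> w k != 0 ->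
  (proj_line w == proj_line v) = [forall t, v k * w t == v t * w k].
Proof.
move=> vk_neq0 wk_neq0; apply/eqP/forallP => [wv t|minors].
  have w_neq0 : w != 0 by apply/ffun_neq0P; exists k.
  by have [a _ ->] := proj_line_eq_scale w_neq0 wv; rewrite !ffunE; apply/eqP; ring.
rewrite -(@proj_lineZ (w k / v k) v) ?mulf_neq0 ?invr_eq0 //; congr proj_line.
by apply/ffunP => t; rewrite ffunE mulrAC [w k * _]mulrC -(eqP (minors t)) mulrC mulKf.
Qed.

End ProjectivePlane.

Lemma meval_fscale (R : idomainType) (n d : nat) (p : {mpoly R[n]}) a (v : {ffun 'I_n -> R}) :
  p \is d.-homog -> p.@[fscale a v] = a ^+ d * p.@[v].
Proof.
move=> p_homog; rewrite !mevalE mulr_sumr; apply: eq_big_seq => m m_supp.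
rewrite mulrCA; congr (_ * _).
under eq_bigr => i _ do rewrite ffunE exprMn.
by rewrite big_split /= prodrXr -mdegE (dhomog_mf p_homog m_supp).
Qed.

Lemma dhomog_big_prod (R : nzRingType) (n : nat) (I : finType) (P : pred I)
    (p : I -> {mpoly R[n]}) (e : I -> nat) :
  (forall i, P i -> p i \is (e i).-homog) ->
  \prod_(i | P i) p i \is (\sum_(i | P i) e i).-homog.
Proof.
by apply: (big_ind2 (fun k q => q \is k.-homog)) => [|k q l r]; [apply: dhomog1|apply: dhomogM].
Qed.

Lemma expf_card_pred (F : finFieldType) (x : F) : x != 0 -> x ^+ #|F|.-1 = 1.
Proof.
move=> x_neq0; apply: (mulfI x_neq0); rewrite mulr1 -exprS prednK ?expf_card //.
exact: ltn_trans (finNzRing_gt1 F).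
Qed.

Lemma subr_expf_card_pred_eq0 (F : finFieldType) (c x : F) : c != 0 ->
  (c ^+ #|F|.-1 - x ^+ #|F|.-1 == 0) = (x != 0).
Proof.
have q1_gt0 : (0 < #|F|.-1)%N by rewrite -subn1 subn_gt0 finNzRing_gt1.
move=> c_neq0; rewrite expf_card_pred //; case: (eqVneq x 0) => [->|x_neq0].
  by rewrite expr0n gtn_eqF // subr0 oner_eq0.
by rewrite expf_card_pred // subrr eqxx.
Qed.

Section PointEvaluation.
Variables (F : finFieldType) (d : nat).
Implicit Types (v w : {ffun 'I_3 -> F}) (f : homog_polys F d).

Definition point_rep (L : {set {ffun 'I_3 -> F}}) : {ffun 'I_3 -> F} :=
  odflt 0 [pick v : {ffun 'I_3 -> F} | (v != 0) && (proj_line v == L)].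

Lemma point_repP L : L \in P2 F -> point_rep L != 0 /\ proj_line (point_rep L) = L.
Proof.
rewrite /point_rep; case: pickP => [v /andP[v_neq0 /eqP //]|no_rep].
by case/imsetP => u; rewrite inE => u_neq0 L_u; have := no_rep u; rewrite u_neq0 L_u eqxx.
Qed.

Definition eval_points f : {ffun 'I_#|P2 F| -> F} :=
  [ffun i => (mpoly_of_dhomog f).@[point_rep (enum_val i)]].

Lemma nb_points_eval f : nb_points f = #|[set i | eval_points f i == 0]|.
Proof.
rewrite /nb_points -(card_imset _ enum_val_inj); apply: eq_card => L; rewrite !inE.
apply/andP/imsetP => [[L_P2 vanish]|[i i_root ->]].
  exists (enum_rank_in L_P2 L); rewrite ?enum_rankK_in // inE ffunE enum_rankK_in //.
  by apply: (forall_inP vanish); have [_ {2}<-] := point_repP L_P2; apply: proj_line_id.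
move: i_root; rewrite inE ffunE => /eqP rep_root; split; first exact: enum_valP.
have [_ rep_line] := point_repP (enum_valP i).
apply/forall_inP => w; rewrite -rep_line => /proj_lineP[a ->].
by rewrite (meval_fscale _ _ (dhomog_is_dhomog f)) rep_root mulr0.
Qed.

Lemma eval_pointsD f g : eval_points (f + g : dhomog 3 F d) = eval_points f + eval_points g.
Proof. by apply/ffunP => i; rewrite !ffunE mevalD. Qed.

Definition nz_coord v : 'I_3 := odflt ord0 [pick i | v i != 0].

Lemma nz_coordP v : v != 0 -> v (nz_coord v) != 0.
Proof.
case/ffun_neq0P => i vi_neq0; rewrite /nz_coord; case: pickP => [j //|no_nz].
by have := no_nz i; rewrite vi_neq0.
Qed.

(* By Fermat, at a [w] with [w k != 0] the factor indexed by [t] is nonzero iff the minor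
   [v k * w t - v t * w k] vanishes; the power of ['X_k] kills the points with [w k = 0]. *)
Definition point_indicator v : {mpoly F[3]} :=
  let k := nz_coord v in
  'X_k ^+ (d - 2 * #|F|.-1) *
  \prod_(t | t != k) ('X_k ^+ #|F|.-1 - (v k *: 'X_t - v t *: 'X_k) ^+ #|F|.-1).

Lemma point_indicator_homog v : (2 * #|F|.-1 <= d)%N -> point_indicator v \is d.-homog.
Proof.
move=> d_ge; set k := nz_coord v.
have X_homog t : ('X_t : {mpoly F[3]}) \is 1.-homog by rewrite dhomogX; apply/eqP/mdeg1.
have pow_homog p e : p \is 1.-homog -> p ^+ e \is e.-homog.
  by move=> p_homog; have := dhomogMn e p_homog; rewrite mul1n.
rewrite -(subnK d_ge) /point_indicator -/k; apply: dhomogM; first exact: pow_homog.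
have -> : (2 * #|F|.-1 = \sum_(t | t != k) #|F|.-1)%N by rewrite sum_nat_const cardC1 card_ord.
apply: dhomog_big_prod => t _; rewrite rpredB ?pow_homog //.
by rewrite rpredB ?dhomogZ.
Qed.

Lemma point_indicator_neq0 v w : (2 * #|F|.-1 < d)%N -> v != 0 ->
  ((point_indicator v).@[w] != 0) = (w != 0) && (proj_line w == proj_line v).
Proof.
move=> d_gt v_neq0; have vk_neq0 := nz_coordP v_neq0; set k := nz_coord v in vk_neq0 *.
rewrite /point_indicator -/k mevalM rmorphXn rmorph_prod /= mevalXU.
under eq_bigr do rewrite mevalB !rmorphXn /= mevalB !mevalZ !mevalXU.
have [wk0|wk_neq0] := eqVneq (w k) 0.
  rewrite wk0 expr0n subn_eq0 leqNgt d_gt mul0r eqxx; apply/esym/negP => /andP[w_neq0 /eqP wv].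
  have [a a_neq0 w_av] := proj_line_eq_scale w_neq0 wv.
  by move: wk0; rewrite w_av ffunE => /eqP; rewrite mulf_eq0 (negPf a_neq0) (negPf vk_neq0).
have w_neq0 : w != 0 by apply/ffun_neq0P; exists k.
rewrite mulf_eq0 negb_or expf_eq0 (negPf wk_neq0) andbF w_neq0.
rewrite (proj_line_eq_minors vk_neq0 wk_neq0) /=.
apply/prodf_neq0/forallP => [minors t|minors t _]; last first.
  by rewrite subr_expf_card_pred_eq0 // negbK subr_eq0 (eqP (minors t)).
have [->|t_neq_k] := eqVneq t k; first by rewrite mulrC.
by have := minors t t_neq_k; rewrite subr_expf_card_pred_eq0 // negbK subr_eq0.
Qed.

Lemma eval_points_surj : (2 * #|F|.-1 < d)%N ->
  forall phi : {ffun 'I_#|P2 F| -> F}, exists f, eval_points f = phi.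
Proof.
move=> d_gt phi; pose r (i : 'I_#|P2 F|) := point_rep (enum_val i).
pose ind i := point_indicator (r i).
have ind_rep i j : ((ind i).@[r j] != 0) = (i == j).
  have [rj_neq0 rj_line] := point_repP (enum_valP j).
  have [ri_neq0 ri_line] := point_repP (enum_valP i).
  by rewrite point_indicator_neq0 // rj_neq0 rj_line ri_line (inj_eq enum_val_inj) eq_sym.
pose g := \sum_i (phi i / (ind i).@[r i]) *: ind i.
have g_homog : g \is d.-homog.
  by apply: rpred_sum => i _; apply/dhomogZ/point_indicator_homog/ltnW.
exists (DHomog g_homog); apply/ffunP => j; rewrite ffunE /= raddf_sum (bigD1 j) //= big1.
  by rewrite addr0 mevalZ divfK // ind_rep.
move=> i ij; rewrite mevalZ; apply/eqP; rewrite mulf_eq0; apply/orP; right.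
by rewrite -[_ == 0]negbK ind_rep.
Qed.

Lemma card_eval_points_fiber : (2 * #|F|.-1 < d)%N -> forall phi,
  #|[set f | eval_points f == phi]| = #|[set f | eval_points f == 0]|.
Proof.
move=> d_gt phi; have [g g_phi] := eval_points_surj d_gt phi.
have shift_inj : injective (fun f : homog_polys F d => (f + g : dhomog 3 F d) : homog_polys F d).
  exact: addIr.
rewrite -(card_preimset _ shift_inj); apply: eq_card => f.
by rewrite !inE eval_pointsD g_phi -{2}[phi]add0r (inj_eq (@addIr _ phi)).
Qed.

End PointEvaluation.

Theorem proposition3p3 (F : finFieldType) (d : nat)
  (hd : (2 * #|F| - 1 <= d)%N) (n : int) :
  (#|[set f : homog_polys F d | (nb_points f)%:Z == n]|%:R
     / #|{: homog_polys F d}|%:R : rat)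
  = bernoulli_sum_prob (#|F| ^ 2 + #|F| + 1) (#|F|%:R)^-1 n.
Proof.
have d_gt : (2 * #|F|.-1 < d)%N.
  by have q_gt1 : (1 < #|F|)%N := finNzRing_gt1 F; lia.
rewrite -card_P2 (bernoulli_sum_probE 0) -[X in (_ ^ X)%N](card_ord #|P2 F|) -card_ffun.
pose has_n_zeros (phi : {ffun 'I_#|P2 F| -> F}) := #|[set i | phi i == 0]|%:Z == n.
rewrite (eq_card (B := [set f | has_n_zeros (eval_points f)])); last first.
  by move=> f; rewrite !inE nb_points_eval.
apply: (ratio_preim_const_fiber (card_eval_points_fiber d_gt)).
by apply/card_gt0P; exists 0; rewrite inE; apply/eqP/ffunP => i; rewrite !ffunE meval0.
Qed.
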